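(* Let $p\in\mathbf{C}[x_1,\dots,x_n]$ have the following property: whenever $\psi$ is an injective $\mathbf{C}$-algebra endomorphism of $\mathbf{C}[x_1,\dots,x_n]$ with $\psi(p)=p$, $\psi$ is an automorphism of $\mathbf{C}[x_1,\dots,x_n]$. If $q \in \mathbf{C}[x_1,\dots,x_n]$ and $\varphi(p)=q$ for some automorphism $\varphi$ of $\mathbf{C}[x_1,\dots,x_N]$ with $N\ge n$, then $\alpha(p)=q$ for some automorphism $\alpha$ of $\mathbf{C}[x_1,\dots,x_n]$.
   Context: Automorphisms are $\mathbf{C}$-algebra automorphisms; $\mathbf{C}[x_1,\dots,x_n]$ is regarded as a subalgebra of $\mathbf{C}[x_1,\dots,x_N]$. *)

From mathcomp Require Import all_boot all_algebra.
From mathcomp Require Import reals complex Rstruct.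
From mathcomp Require Import mpoly.
Set Implicit Arguments. Unset Strict Implicit. Unset Printing Implicit Defensive.
Import GRing.Theory.
Local Open Scope ring_scope.

Definition C : closedFieldType := (Rdefinitions.R)[i]%C.

Definition alg_endo (A : algType C) (f : A -> A) : Prop :=
  [/\ forall x y, f (x + y) = f x + f y,
      forall (a : C) x, f (a *: x) = a *: f x,
      forall x y, f (x * y) = f x * f y
    & f 1 = 1].

Definition alg_aut (A : algType C) (f : A -> A) : Prop :=
  alg_endo f /\ bijective f.

Definition incl_poly (n N : nat) (h : (n <= N)%N) (p : {mpoly C[n]}) : {mpoly C[N]} :=
  comp_mpoly [tuple 'X_(widen_ord h i) | i < n] p.
Arguments incl_poly {n N} h p.

(* An automorphism phi of K[x_1..x_N] has an invertible Jacobian matrix at 0.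
   Following the inclusion K[x_1..x_n] -> K[x_1..x_N] by phi and then by a
   linear retraction x_l |-> sum_j L_lj x_j of the inclusion gives an
   endomorphism beta of K[x_1..x_n] with beta p = q, whose Jacobian at 0 is
   (the first n rows of D phi(0)) * L.  For a generic choice of L this matrix
   is invertible, and in characteristic 0 a substitution with nonzero Jacobian
   determinant is injective.  The same construction for phi^-1 yields an
   injective gamma with gamma q = p.  Then gamma \o beta fixes p, so it is an
   automorphism by the rigidity of p; hence gamma is bijective and
   alpha = gamma^-1 maps p to q. *)

From mathcomp Require Import all_boot all_algebra.
From mathcomp Require Import complex.
From mathcomp Require Import mpoly.
Set Implicit Arguments. Unset Strict Implicit. Unset Printing Implicit Defensive.
Import GRing.Theory.
Local Open Scope ring_scope.

Section AlgMorph.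
Variable K : comNzRingType.

Definition alg_morph (A B : algType K) (f : A -> B) : Prop :=
  [/\ forall x y, f (x + y) = f x + f y,
      forall (a : K) x, f (a *: x) = a *: f x,
      forall x y, f (x * y) = f x * f y
    & f 1 = 1].

Lemma alg_morph_comp (A B D : algType K) (f : A -> B) (g : B -> D) :
  alg_morph f -> alg_morph g -> alg_morph (g \o f).
Proof.
case=> fD fZ fM f1 [gD gZ gM g1]; split=> /= [x y|a x|x y|].
- by rewrite fD gD.
- by rewrite fZ gZ.
- by rewrite fM gM.
- by rewrite f1 g1.
Qed.

Lemma alg_morph_can (A B : algType K) (f : A -> B) (g : B -> A) :
  alg_morph f -> cancel f g -> cancel g f -> alg_morph g.
Proof.
case=> fD fZ fM f1 fK gK; have fI := can_inj fK.
split=> [x y|a x|x y|]; apply: fI.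
- by rewrite fD !gK.
- by rewrite fZ !gK.
- by rewrite fM !gK.
- by rewrite f1 gK.
Qed.

Lemma comp_mpoly_alg_morph (m k : nat) (t : m.-tuple {mpoly K[k]}) :
  alg_morph (comp_mpoly t).
Proof.
split=> [x y|a x|x y|]; first exact: comp_mpolyD.
- exact: comp_mpolyZ.
- exact: rmorphM.
- exact: comp_mpoly1.
Qed.

Lemma alg_morph_mPo (k l : nat) (f : {mpoly K[k]} -> {mpoly K[l]}) p :
  alg_morph f -> f p = p \mPo [tuple f 'X_i | i < k].
Proof.
case=> fD fZ fM f1.
have f0 : f 0 = 0 by apply: (addrI (f 0)); rewrite -fD !addr0.
rewrite {1}(mpolyE p) comp_mpolyE (big_morph f fD f0); apply: eq_bigr => m _.
rewrite fZ mpolyXE_id (big_morph f fM f1); congr (_ *: _); apply: eq_bigr => i _.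
rewrite tnth_mktuple; elim: (m i) => [|e IHe]; first by rewrite !expr0.
by rewrite !exprS fM IHe.
Qed.

End AlgMorph.

Section Substitution.
Variable K : comNzRingType.

Definition comp_tuple (l m k : nat) (t : l.-tuple {mpoly K[m]})
    (lq : m.-tuple {mpoly K[k]}) : l.-tuple {mpoly K[k]} :=
  [tuple tnth t i \mPo lq | i < l].

Lemma comp_mpolyA (m k l : nat) (p : {mpoly K[m]}) (t : m.-tuple {mpoly K[k]})
    (lq : k.-tuple {mpoly K[l]}) :
  p \mPo comp_tuple t lq = (p \mPo t) \mPo lq.
Proof.
rewrite comp_mpolyE [p \mPo t]comp_mpolyE raddf_sum /=; apply: eq_bigr => m' _.
rewrite comp_mpolyZ rmorph_prod; congr (_ *: _); apply: eq_bigr => i _.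
by rewrite rmorphXn tnth_mktuple.
Qed.

Definition lin_tuple (m k : nat) (A : 'M[K]_(m, k)) : m.-tuple {mpoly K[k]} :=
  [tuple \sum_j A i j *: 'X_j | i < m].

Lemma lin_tuple1 (k : nat) : lin_tuple 1%:M = [tuple 'X_i | i < k].
Proof.
apply: eq_from_tnth => i; rewrite !tnth_mktuple (bigD1 i) //= big1 ?addr0.
  by rewrite mxE eqxx scale1r.
by move=> j /negPf ji; rewrite mxE eq_sym ji scale0r.
Qed.

Lemma lin_tuple_pid (n N : nat) (h : (n <= N)%N) :
  lin_tuple (pid_mx n) = [tuple 'X_(widen_ord h i) | i < n].
Proof.
apply: eq_from_tnth => i; rewrite !tnth_mktuple (bigD1 (widen_ord h i)) //=.
rewrite big1 ?addr0; first by rewrite mxE eqxx ltn_ord scale1r.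
by move=> j ji; rewrite mxE eq_sym (negPf ji : (j == i :> nat) = false) scale0r.
Qed.

Lemma comp_lin_tuple (m k l : nat) (A : 'M[K]_(m, k)) (B : 'M[K]_(k, l)) :
  comp_tuple (lin_tuple A) (lin_tuple B) = lin_tuple (A *m B).
Proof.
apply: eq_from_tnth => i; rewrite !tnth_mktuple raddf_sum /=.
under eq_bigr do rewrite comp_mpolyZ comp_mpolyXU -tnth_nth tnth_mktuple scaler_sumr.
rewrite exchange_big; apply: eq_bigr => j _.
by rewrite mxE scaler_suml; apply: eq_bigr => c _; rewrite scalerA.
Qed.

Lemma meval_lin_tuple (m k : nat) (A : 'M[K]_(m, k)) i :
  (tnth (lin_tuple A) i).@[fun=> 0] = 0.
Proof.
by rewrite tnth_mktuple raddf_sum big1 // => j _ /=; rewrite mevalZ mevalXU mulr0.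
Qed.

End Substitution.

Section Jacobian.
Variable K : comNzRingType.

Lemma mderivXU (k : nat) (i j : 'I_k) :
  mderiv j ('X_i : {mpoly K[k]}) = (i == j)%:R%:MP.
Proof.
rewrite mderivX mnm1E; case: eqP => [->|_]; last by rewrite scale0r mpolyC0.
have -> : (U_(j) - U_(j) = 0)%MM by apply/mnmP => l; rewrite mnmBE subnn mnmE.
by rewrite mpolyX0 scale1r mpolyC1.
Qed.

Lemma mderiv_mPo (m k : nat) (t : m.-tuple {mpoly K[k]}) (j : 'I_k) p :
  mderiv j (p \mPo t) = \sum_(i < m) (mderiv i p \mPo t) * mderiv j (tnth t i).
Proof.
pose P p := mderiv j (p \mPo t) =
  \sum_(i < m) (mderiv i p \mPo t) * mderiv j (tnth t i).
have PD x y : P x -> P y -> P (x + y).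
  rewrite /P comp_mpolyD mderivD => -> ->; rewrite -big_split.
  by apply: eq_bigr => i _; rewrite mderivD comp_mpolyD mulrDl.
have PM x y : P x -> P y -> P (x * y).
  rewrite /P rmorphM mderivM => -> ->; rewrite mulr_suml mulr_sumr -big_split.
  apply: eq_bigr => i _; rewrite mderivM comp_mpolyD !rmorphM /= mulrDl.
  by rewrite mulrAC mulrA.
have PC c : P c%:MP.
  rewrite /P comp_mpolyC mderivC big1 // => i _.
  by rewrite mderivC comp_mpolyC mul0r.
have PX i : P 'X_i.
  rewrite /P comp_mpolyXU -tnth_nth (bigD1 i) //= big1 ?addr0.
    by rewrite mderivXU eqxx comp_mpolyC mul1r.
  by move=> l /negPf il; rewrite mderivXU eq_sym il comp_mpolyC mul0r.
elim/mpolyind: p => [|c mm p _ _ Pp]; first exact: (PC 0).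
apply: (PD) => //; rewrite -mul_mpolyC; apply: (PM) => //.
rewrite mpolyXE_id; apply: (big_ind P) => [|x y|i _]; [exact: (PC 1)|exact: (PM)|].
by elim: (mm i) => [|e IHe]; [exact: (PC 1) | rewrite exprS; exact: PM (PX i) IHe].
Qed.

Definition jacobian (m k : nat) (t : m.-tuple {mpoly K[k]}) :
    'M[{mpoly K[k]}]_(m, k) :=
  \matrix_(i, j) mderiv j (tnth t i).

Lemma jacobian_comp (l m k : nat) (t : l.-tuple {mpoly K[m]})
    (lq : m.-tuple {mpoly K[k]}) :
  jacobian (comp_tuple t lq) = map_mx (comp_mpoly lq) (jacobian t) *m jacobian lq.
Proof.
apply/matrixP => i j; rewrite !mxE tnth_mktuple mderiv_mPo.
by apply: eq_bigr => c _; rewrite !mxE.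
Qed.

Lemma jacobian_lin_tuple (m k : nat) (A : 'M[K]_(m, k)) :
  jacobian (lin_tuple A) = map_mx (fun a => a%:MP) A.
Proof.
apply/matrixP => i j; rewrite !mxE tnth_mktuple raddf_sum (bigD1 j) //=.
rewrite big1 ?addr0.
  by rewrite mderivZ mderivXU eqxx mpolyC1 -mul_mpolyC mulr1.
by move=> c /negPf cj; rewrite mderivZ mderivXU cj scaler0.
Qed.

Definition jacobian_at (m k : nat) (v : 'I_k -> K) (t : m.-tuple {mpoly K[k]}) :
    'M[K]_(m, k) :=
  map_mx (meval v) (jacobian t).

Lemma eq_jacobian_at (m k : nat) (v1 v2 : 'I_k -> K) (t : m.-tuple {mpoly K[k]}) :
  v1 =1 v2 -> jacobian_at v1 t = jacobian_at v2 t.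
Proof. by move=> v12; apply/matrixP => i j; rewrite !mxE; exact: meval_eq. Qed.

Lemma jacobian_at_comp (l m k : nat) (v : 'I_k -> K) (t : l.-tuple {mpoly K[m]})
    (lq : m.-tuple {mpoly K[k]}) :
  jacobian_at v (comp_tuple t lq) =
  jacobian_at (fun i => (tnth lq i).@[v]) t *m jacobian_at v lq.
Proof.
rewrite /jacobian_at jacobian_comp map_mxM; congr (_ *m _).
by apply/matrixP => i j; rewrite !mxE /= comp_mpoly_meval.
Qed.

Lemma jacobian_at_lin_tuple (m k : nat) (v : 'I_k -> K) (A : 'M[K]_(m, k)) :
  jacobian_at v (lin_tuple A) = A.
Proof.
by apply/matrixP => i j; rewrite /jacobian_at jacobian_lin_tuple !mxE mevalC.
Qed.

End Jacobian.

Lemma jacobian_at_unitmx (K : comUnitRingType) (k : nat)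
    (g h : k.-tuple {mpoly K[k]}) v :
  comp_tuple h g = [tuple 'X_i | i < k] -> jacobian_at v g \in unitmx.
Proof.
move=> hg; have := jacobian_at_comp v h g.
by rewrite hg -lin_tuple1 jacobian_at_lin_tuple => /esym/mulmx1_unit[].
Qed.

Lemma msize_mderiv (R : nzRingType) (k : nat) (p : {mpoly R[k]}) i :
  (msize (mderiv i p) <= (msize p).-1)%N.
Proof.
rewrite [X in (X <= _)%N]msizeE; apply/bigmax_leqP_seq => m mp _.
have : (m + U_(i))%MM \in msupp p.
  move: mp; rewrite !mcoeff_msupp mcoeff_mderiv; apply: contraNN => /eqP ->.
  by rewrite mul0rn.
by move/msize_mdeg_lt; rewrite mdegD mdeg1 addn1; case: (msize p).
Qed.

Section CharZero.
Variable K : fieldType.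
Hypothesis K0 : [pchar K] =i pred0.

Lemma mderiv_eq0_mpolyC (k : nat) (p : {mpoly K[k]}) :
  (forall i, mderiv i p = 0) -> p = (p@_0)%:MP.
Proof.
move=> dp0; apply: msize1_polyC; rewrite msizeE; apply/bigmax_leqP_seq => m mp _.
rewrite ltnS leqn0 mdegE sum_nat_eq0; apply/forallP => i; apply/implyP => _.
rewrite -leqn0 leqNgt; apply/negP => mi_gt0.
have Ui_le_m : (U_(i) <= m)%MM.
  by apply/mnm_lepP => l; rewrite mnm1E; case: eqP => [<-|].
move/(congr1 (mcoeff (m - U_(i))%MM))/eqP: (dp0 i); apply/negP.
rewrite mcoeff_mderiv submK // mcoeff0 -mulr_natr mulf_neq0 -?mcoeff_msupp //.
by rewrite ((pcharf0P K).1 K0).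
Qed.

Lemma comp_mpoly_eq0 (k : nat) (t : k.-tuple {mpoly K[k]}) r :
  \det (jacobian t) != 0 -> r \mPo t = 0 -> r = 0.
Proof.
move=> Jt_neq0; move: {2}(msize r) (leqnn (msize r)) => d.
elim: d r => [|d IHd] r r_size rt0.
  by apply/eqP; rewrite -msize_poly_eq0 -leqn0.
have dr_t0 i : mderiv i r \mPo t = 0.
  pose v : 'rV_k := \row_i (mderiv i r \mPo t).
  have vJ0 : v *m jacobian t = 0.
    apply/rowP => j; rewrite !mxE.
    transitivity (mderiv j (r \mPo t)); last by rewrite rt0 mderiv0.
    by rewrite mderiv_mPo; apply: eq_bigr => l _; rewrite !mxE.
  have -> : mderiv i r \mPo t = v 0 i by rewrite mxE.
  apply/eqP; apply: contraNT Jt_neq0 => vi_neq0; apply/det0P; exists v => //.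
  by apply: contraNneq vi_neq0 => ->; rewrite mxE.
have dr0 i : mderiv i r = 0.
  apply: IHd (dr_t0 i); apply: leq_trans (msize_mderiv r i) _.
  by rewrite -ltnS; case: (msize r) r_size.
by move: rt0; rewrite (mderiv_eq0_mpolyC dr0) comp_mpolyC => ->.
Qed.

Lemma comp_mpoly_inj (k : nat) (t : k.-tuple {mpoly K[k]}) :
  \det (jacobian t) != 0 -> injective (comp_mpoly t).
Proof.
move=> Jt_neq0 r1 r2 r12; apply/eqP; rewrite -subr_eq0; apply/eqP.
by apply: (comp_mpoly_eq0 Jt_neq0); rewrite comp_mpolyB r12 subrr.
Qed.

Lemma pchar0_natr_inj : injective (fun i : nat => i%:R : K).
Proof.
suff le_inj i j : (i <= j)%N -> i%:R = j%:R :> K -> i = j.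
  by move=> i j /=; case: (leqP i j) => [/le_inj // | /ltnW /le_inj ij /esym /ij].
move=> le_ij /eqP; rewrite eq_sym -subr_eq0 -natrB // ((pcharf0P K).1 K0).
by rewrite subn_eq0 => le_ji; apply/eqP; rewrite eqn_leq le_ij.
Qed.

Lemma pchar0_nonroot (Q : {poly K}) : Q != 0 -> exists t, ~~ root Q t.
Proof.
move=> Q_neq0; pose s := [seq i%:R : K | i <- iota 0 (size Q)].
have s_uniq : uniq s by rewrite map_inj_uniq ?iota_uniq //; exact: pchar0_natr_inj.
have [s_roots|/allPn[t _ Qt]] := boolP (all (root Q) s); last by exists t.
by have := max_poly_roots Q_neq0 s_roots s_uniq; rewrite size_map size_iota ltnn.
Qed.

Lemma exists_shift_unitmx (n : nat) (E A : 'M[K]_n) :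
  exists t, (E + t%:M) \in unitmx /\ (1%:M + t *: A) \in unitmx.
Proof.
pose Q1 := char_poly (- E).
pose Q2 := \det (1%:M + 'X *: map_mx polyC A).
have Q1E t : Q1.[t] = \det (E + t%:M).
  rewrite /Q1 /char_poly -horner_evalE -det_map_mx; congr (\det _).
  apply/matrixP => i j; rewrite !mxE /= horner_evalE.
  by rewrite hornerD hornerN hornerMn hornerX hornerC opprK addrC.
have Q2E t : Q2.[t] = \det (1%:M + t *: A).
  rewrite /Q2 -horner_evalE -det_map_mx; congr (\det _).
  apply/matrixP => i j; rewrite !mxE /= horner_evalE !hornerE.
  by case: (i == j); rewrite ?hornerC ?horner0 ?horner1.
have Q1_neq0 : Q1 != 0 by apply: monic_neq0; exact: char_poly_monic.
have Q2_neq0 : Q2 != 0.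
  apply: contra_neq (oner_neq0 K) => Q20.
  by rewrite -(det1 _ n) -(addr0 1%:M) -(scale0r A) -Q2E Q20 horner0.
have [t] := pchar0_nonroot (mulf_neq0 Q1_neq0 Q2_neq0).
by rewrite rootM negb_or /root Q1E Q2E -!unitfE -!unitmxE => /andP[]; exists t.
Qed.

Lemma exists_right_inverse_unitmx (m n : nat) (S P : 'M[K]_(m, n))
    (V W : 'M[K]_(n, m)) :
  S *m V = 1%:M -> P *m W = 1%:M ->
  exists L : 'M[K]_(n, m), S *m L = 1%:M /\ P *m L \in unitmx.
Proof.
move=> SV1 PW1.
(* S L = 1 for every t, while P L = (1 + t P V) (S W + t)^-1. *)
have [t [Et_unit At_unit]] := exists_shift_unitmx (S *m W) (P *m V).
exists ((W + t *: V) *m invmx (S *m W + t%:M)); split.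
  by rewrite mulmxA mulmxDr -scalemxAr SV1 scalemx1 mulmxV.
by rewrite mulmxA mulmxDr -scalemxAr PW1 unitmx_mul At_unit unitmx_inv.
Qed.

Definition mpoly_widen (n N : nat) (h : (n <= N)%N) (p : {mpoly K[n]}) :
    {mpoly K[N]} :=
  p \mPo [tuple 'X_(widen_ord h i) | i < n].

Lemma widen_mPo_descent (n N : nat) (h : (n <= N)%N) (g : N.-tuple {mpoly K[N]})
    (p q : {mpoly K[n]}) :
  jacobian_at (fun=> 0) g \in unitmx ->
  mpoly_widen h p \mPo g = mpoly_widen h q ->
  exists2 t : n.-tuple {mpoly K[n]}, injective (comp_mpoly t) & p \mPo t = q.
Proof.
rewrite /mpoly_widen -lin_tuple_pid => Jg_unit gpq.
set J0 := jacobian_at _ g in Jg_unit.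
set e := lin_tuple (pid_mx n : 'M[K]_(n, N)).
have pid1 : (pid_mx n : 'M[K]_(n, N)) *m pid_mx n = 1%:M.
  by rewrite pid_mx_id ?pid_mx_1.
have PW1 : (pid_mx n : 'M[K]_(n, N)) *m J0 *m (invmx J0 *m pid_mx n) = 1%:M.
  by rewrite mulmxA mulmxK.
have [L [pidL1 PL_unit]] := exists_right_inverse_unitmx pid1 PW1.
pose pi := lin_tuple L.
exists (comp_tuple (comp_tuple e g) pi).
  apply: comp_mpoly_inj; apply: contraTneq PL_unit => Jdet0.
  have -> : pid_mx n *m J0 *m L =
            jacobian_at (fun=> 0) (comp_tuple (comp_tuple e g) pi).
    rewrite jacobian_at_comp jacobian_at_lin_tuple.
    rewrite (eq_jacobian_at _ (meval_lin_tuple L)) jacobian_at_comp.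
    by rewrite jacobian_at_lin_tuple.
  by rewrite unitmxE /jacobian_at det_map_mx Jdet0 rmorph0 unitr0.
rewrite !comp_mpolyA gpq -comp_mpolyA comp_lin_tuple pidL1 lin_tuple1.
exact: comp_mpoly_id.
Qed.

Lemma alg_aut_widen_descent (n N : nat) (h : (n <= N)%N)
    (phi : {mpoly K[N]} -> {mpoly K[N]}) (p q : {mpoly K[n]}) :
  alg_morph phi -> bijective phi -> phi (mpoly_widen h p) = mpoly_widen h q ->
  exists2 t : n.-tuple {mpoly K[n]}, injective (comp_mpoly t) & p \mPo t = q.
Proof.
move=> phi_morph [psi phiK psiK]; rewrite alg_morph_mPo //.
apply: widen_mPo_descent.
apply: (@jacobian_at_unitmx _ _ _ [tuple psi 'X_i | i < N]).
apply: eq_from_tnth => i; rewrite !tnth_mktuple -alg_morph_mPo //.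
Qed.

Lemma rigid_alg_aut_widen_descent (n N : nat) (h : (n <= N)%N) (p q : {mpoly K[n]})
    (phi : {mpoly K[N]} -> {mpoly K[N]}) :
  (forall sigma : {mpoly K[n]} -> {mpoly K[n]},
     alg_morph sigma -> injective sigma -> sigma p = p -> bijective sigma) ->
  alg_morph phi -> bijective phi -> phi (mpoly_widen h p) = mpoly_widen h q ->
  exists alpha : {mpoly K[n]} -> {mpoly K[n]},
    [/\ alg_morph alpha, bijective alpha & alpha p = q].
Proof.
move=> p_rigid phi_morph phi_bij phi_pq; have [psi phiK psiK] := phi_bij.
have psi_morph := alg_morph_can phi_morph phiK psiK.
have psi_qp : psi (mpoly_widen h q) = mpoly_widen h p by rewrite -phi_pq phiK.
have [tb tb_inj tb_pq] := alg_aut_widen_descent phi_morph phi_bij phi_pq.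
have [tc tc_inj tc_qp] :=
  alg_aut_widen_descent psi_morph (Bijective psiK phiK) psi_qp.
have [sigma_inv _ sigma_invK] : bijective (comp_mpoly tc \o comp_mpoly tb).
  apply: p_rigid; last by rewrite /= tb_pq.
    exact/alg_morph_comp/comp_mpoly_alg_morph/comp_mpoly_alg_morph.
  exact: inj_comp.
pose alpha := comp_mpoly tb \o sigma_inv.
have alphaK : cancel alpha (comp_mpoly tc) by move=> r; rewrite /= -[RHS]sigma_invK.
have tcK : cancel (comp_mpoly tc) alpha by move=> r; apply: tc_inj; rewrite alphaK.
exists alpha; split; last by rewrite -tc_qp tcK.
- exact: alg_morph_can (comp_mpoly_alg_morph tc) tcK alphaK.
- exact: Bijective alphaK tcK.
Qed.

End CharZero.

Theorem theorem1p5 (n : nat) (p : {mpoly C[n]})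
  (Hp : forall psi : {mpoly C[n]} -> {mpoly C[n]},
          alg_endo psi -> injective psi -> psi p = p -> alg_aut psi)
  (q : {mpoly C[n]}) (N : nat) (hnN : (n <= N)%N)
  (phi : {mpoly C[N]} -> {mpoly C[N]})
  (Hphi : alg_aut phi) (Hpq : phi (incl_poly hnN p) = incl_poly hnN q) :
  exists alpha : {mpoly C[n]} -> {mpoly C[n]}, alg_aut alpha /\ alpha p = q.
Proof.
have C0 : [pchar C] =i pred0 by exact: Num.Theory.pchar_num.
have p_rigid sigma sigma_morph sigma_inj sigma_p :=
  (Hp sigma sigma_morph sigma_inj sigma_p).2.
have [alpha [alpha_morph alpha_bij alpha_pq]] :=
  rigid_alg_aut_widen_descent C0 p_rigid Hphi.1 Hphi.2 Hpq.
by exists alpha.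
Qed.
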